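(* Let $L$ be an ideal lattice and $L'\subseteq L$ a subset such that (i) $\inf A\in L'$ for every $A\subseteq L'$, and (ii) $\sup A\in L'$ for every directed $A\subseteq L'$. Define $\pi\colon L\to L'$ by $\pi(a)=\bigwedge\{a'\in L'\mid a\leq a'\}$ and on $L'$ the product $a\cdot b=\pi(ab)$. Suppose (iii) $\pi(a\pi(b))=\pi(ab)=\pi(\pi(a)b)$ for all $a,b\in L$. Then $L'$, with the partial order induced from $L$ and the product $\cdot$, is an ideal lattice.
   Context: An ideal lattice is a poset $(L,\leq)$ with an associative multiplication such that: (L1) $L$ is a complete lattice; (L2) every element is a supremum of compact elements ($a$ is compact if $a\leq\sup A$ implies $a\leq\sup A'$ for some finite $A'\subseteq A$); (L3) multiplication distributes over binary joins on both sides; (L4) $1=\sup L$ is compact and is a two-sided identity; (L5) products of compact elements are compact. *)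

(* Ideal lattices are defined "on a carrier predicate"
   C : T -> Prop, so that both L (C = everything) and a subset L' of L with the
   induced order can be treated uniformly.  All suprema / infima below are
   computed INSIDE C (i.e. with respect to the induced order on C). *)
From Stdlib Require Import List.

Set Implicit Arguments.

Section IdealLattice.
Variable T : Type.
Variable C : T -> Prop.
Variable le : T -> T -> Prop.

Definition subset (A B : T -> Prop) : Prop := forall x, A x -> B x.

Definition upper_in (A : T -> Prop) (x : T) : Prop :=
  C x /\ forall y, A y -> le y x.

Definition lower_in (A : T -> Prop) (x : T) : Prop :=
  C x /\ forall y, A y -> le x y.

Definition is_sup_in (A : T -> Prop) (x : T) : Prop :=
  upper_in A x /\ forall z, upper_in A z -> le x z.

Definition is_inf_in (A : T -> Prop) (x : T) : Prop :=
  lower_in A x /\ forall z, lower_in A z -> le z x.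

Definition partial_order_on : Prop :=
  (forall x, C x -> le x x) /\
  (forall x y, C x -> C y -> le x y -> le y x -> x = y) /\
  (forall x y z, C x -> C y -> C z -> le x y -> le y z -> le x z).

Definition complete_on : Prop :=
  partial_order_on /\ forall A, subset A C -> exists s, is_sup_in A s.

Definition list_set (l : list T) : T -> Prop := fun x => In x l.

Definition compact_in (a : T) : Prop :=
  C a /\
  forall A s, subset A C -> is_sup_in A s -> le a s ->
    exists (l : list T) (s' : T),
      subset (list_set l) A /\ is_sup_in (list_set l) s' /\ le a s'.

Definition pair_set (x y : T) : T -> Prop := fun z => z = x \/ z = y.

Definition ideal_lattice_on (mul : T -> T -> T) : Prop :=
  (forall a b, C a -> C b -> C (mul a b)) /\
  (forall a b c, C a -> C b -> C c -> mul (mul a b) c = mul a (mul b c)) /\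
  complete_on /\
  (forall a, C a -> exists A, subset A compact_in /\ is_sup_in A a) /\
  (forall a b c s, C a -> C b -> C c -> is_sup_in (pair_set b c) s ->
      is_sup_in (pair_set (mul a b) (mul a c)) (mul a s) /\
      is_sup_in (pair_set (mul b a) (mul c a)) (mul s a)) /\
  (forall t, is_sup_in C t ->
      compact_in t /\ forall a, C a -> mul t a = a /\ mul a t = a) /\
  (forall a b, compact_in a -> compact_in b -> compact_in (mul a b)).

End IdealLattice.

Definition everything (T : Type) : T -> Prop := fun _ => True.
Arguments everything T _ : clear implicits.

Definition directed (T : Type) (le : T -> T -> Prop) (A : T -> Prop) : Prop :=
  (exists x, A x) /\
  forall x y, A x -> A y -> exists z, A z /\ le x z /\ le y z.

(* The closure [pi] onto [L'] maps suprema in [L] to suprema in [L'], so [L'] is a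
   complete lattice whose joins are the closures of joins in [L]; distributivity,
   associativity and the unit transfer through [pi] by (iii).  The compact elements
   of [L'] are exactly the closures of compact elements of [L]: [pi c] is compact
   because [L'] is closed under directed suprema, so a cover of [pi c] in [L'] can
   be replaced by the directed family of its finite joins; conversely a compact
   element of [L'] is the closure of a finite join of compact elements below it.
   Closing under products then reduces to (L5) in [L] by (iii). *)
From Stdlib Require Import List.

Set Implicit Arguments.
Unset Strict Implicit.

Definition image (T : Type) (f : T -> T) (A : T -> Prop) : T -> Prop :=
  fun y => exists x, A x /\ y = f x.

Section Suprema.
Variables (T : Type) (le : T -> T -> Prop).

Lemma sup_in_carrier C A s : is_sup_in C le A s -> C s.
Proof. intros [[Hs _] _]; exact Hs. Qed.

Lemma sup_upper C A s x : is_sup_in C le A s -> A x -> le x s.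
Proof. intros [[_ Hs] _]; apply Hs. Qed.

Lemma sup_least C A s z : is_sup_in C le A s -> upper_in C le A z -> le s z.
Proof. intros [_ Hs]; apply Hs. Qed.

Lemma list_set_app (l1 l2 : list T) x :
  list_set (l1 ++ l2) x <-> list_set l1 x \/ list_set l2 x.
Proof. apply in_app_iff. Qed.

End Suprema.

Section CompleteLattice.
Variables (T : Type) (le : T -> T -> Prop).
Local Notation U := (everything T).

Hypothesis le_refl : forall x, le x x.
Hypothesis le_antisym : forall x y, le x y -> le y x -> x = y.
Hypothesis le_trans : forall x y z, le x y -> le y z -> le x z.
Hypothesis sup_exists : forall A, exists s, is_sup_in U le A s.

Lemma is_sup_unique C A s1 s2 : is_sup_in C le A s1 -> is_sup_in C le A s2 -> s1 = s2.
Proof.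
  intros H1 H2. apply le_antisym.
  - apply (sup_least H1), (proj1 H2).
  - apply (sup_least H2), (proj1 H1).
Qed.

Lemma is_sup_singleton C y : C y -> is_sup_in C le (list_set (y :: nil)) y.
Proof.
  intros Hy. split; [split; [exact Hy|] |].
  - intros z [<-|[]]; apply le_refl.
  - intros z [_ Hz]. apply Hz. left; reflexivity.
Qed.

Lemma compact_in_least b : (forall x, le b x) -> compact_in U le b.
Proof.
  intros Hb. split; [exact I|]. intros A s _ _ _. exists nil, b.
  split; [intros x []|]. split; [|apply le_refl].
  split; [split; [exact I | intros y []] | intros z _; apply Hb].
Qed.

Lemma compact_in_join c1 c2 u : compact_in U le c1 -> compact_in U le c2 ->
  is_sup_in U le (pair_set c1 c2) u -> compact_in U le u.
Proof.
  intros [_ K1] [_ K2] Hu. split; [exact I|]. intros A s HA Hs Hus.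
  destruct (K1 A s HA Hs) as [l1 [s1 [Hl1 [Hs1 Hc1]]]].
  { apply le_trans with u; [apply (sup_upper Hu); left|]; auto. }
  destruct (K2 A s HA Hs) as [l2 [s2 [Hl2 [Hs2 Hc2]]]].
  { apply le_trans with u; [apply (sup_upper Hu); right|]; auto. }
  destruct (sup_exists (list_set (l1 ++ l2))) as [s3 Hs3].
  exists (l1 ++ l2), s3. split; [|split; [exact Hs3|]].
  - intros x Hx. apply list_set_app in Hx as [Hx|Hx]; auto.
  - apply (sup_least Hu). split; [exact I|]. intros y [->| ->].
    + apply le_trans with s1; [exact Hc1|]. apply (sup_least Hs1).
      split; [exact I|]. intros z Hz. apply (sup_upper Hs3), list_set_app; auto.
    + apply le_trans with s2; [exact Hc2|]. apply (sup_least Hs2).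
      split; [exact I|]. intros z Hz. apply (sup_upper Hs3), list_set_app; auto.
Qed.

Section Closure.
Variables (L' : T -> Prop) (pi : T -> T).
Hypothesis inf_closed :
  forall A x, subset A L' -> is_inf_in U le A x -> L' x.
Hypothesis directed_sup_closed :
  forall A x, subset A L' -> directed le A -> is_sup_in U le A x -> L' x.
Hypothesis pi_spec : forall a, is_inf_in U le (fun a' => L' a' /\ le a a') (pi a).

Lemma pi_in x : L' (pi x).
Proof. apply (inf_closed (fun y (Hy : L' y /\ le x y) => proj1 Hy) (pi_spec x)). Qed.

Lemma le_pi x : le x (pi x).
Proof. apply (proj2 (pi_spec x)). split; [exact I|]. intros y [_ Hy]; exact Hy. Qed.

Lemma pi_least x z : L' z -> le x z -> le (pi x) z.
Proof. intros Hz Hxz. apply (proj2 (proj1 (pi_spec x))); auto. Qed.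

Lemma pi_id x : L' x -> pi x = x.
Proof. intros Hx. apply le_antisym; [apply pi_least, le_refl | apply le_pi]; auto. Qed.

Lemma pi_mono x y : le x y -> le (pi x) (pi y).
Proof. intros H. apply pi_least; [apply pi_in|]. apply le_trans with y; auto using le_pi. Qed.

Lemma is_sup_pi A B u : is_sup_in U le A u ->
  (forall y, B y -> exists x, A x /\ y = pi x) ->
  (forall x, A x -> exists y, B y /\ le x y) ->
  is_sup_in L' le B (pi u).
Proof.
  intros Hu HBA HAB. split; [split; [apply pi_in|] |].
  - intros y Hy. destruct (HBA y Hy) as [x [Hx ->]]. apply pi_mono, (sup_upper Hu), Hx.
  - intros z [Hz Hzub]. apply pi_least; [exact Hz|]. apply (sup_least Hu).
    split; [exact I|]. intros x Hx. destruct (HAB x Hx) as [y [Hy Hxy]].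
    apply le_trans with y; auto.
Qed.

Lemma is_sup_pi_image A u : is_sup_in U le A u -> is_sup_in L' le (image pi A) (pi u).
Proof.
  intros Hu. apply (is_sup_pi Hu); [tauto|].
  intros x Hx. exists (pi x). split; [exists x; auto | apply le_pi].
Qed.

Lemma is_sup_pi_sub A u : subset A L' -> is_sup_in U le A u -> is_sup_in L' le A (pi u).
Proof.
  intros HA Hu. apply (is_sup_pi Hu).
  - intros y Hy. exists y. split; [exact Hy | symmetry; apply pi_id; auto].
  - intros x Hx. exists x. split; [exact Hx | apply le_refl].
Qed.

Lemma sup_in_closure_exists A : subset A L' -> exists s, is_sup_in L' le A s.
Proof. intros HA. destruct (sup_exists A) as [u Hu]. exists (pi u). apply is_sup_pi_sub; auto. Qed.

Lemma is_sup_pi_pair x y u : is_sup_in U le (pair_set x y) u ->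
  is_sup_in L' le (pair_set (pi x) (pi y)) (pi u).
Proof.
  intros Hu. apply (is_sup_pi Hu).
  - intros z [->| ->]; [exists x | exists y]; split; auto; [left|right]; auto.
  - intros z [->| ->]; [exists (pi x) | exists (pi y)];
      split; auto using le_pi; [left|right]; auto.
Qed.

Lemma is_sup_pi_top one : is_sup_in U le U one -> is_sup_in L' le L' (pi one).
Proof.
  intros Hone. apply (is_sup_pi Hone).
  - intros y Hy. exists y. split; [exact I | symmetry; apply pi_id; auto].
  - intros x _. exists (pi x). split; [apply pi_in | apply le_pi].
Qed.

Definition finite_sups (A : T -> Prop) : T -> Prop :=
  fun d => exists l, subset (list_set l) A /\ is_sup_in L' le (list_set l) d.

Lemma finite_sups_directed A : subset A L' -> directed le (finite_sups A).
Proof.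
  intros HA. split.
  - destruct (sup_in_closure_exists (A := list_set nil)) as [d Hd]; [intros x []|].
    exists d, nil. split; [intros x []|exact Hd].
  - intros x y [l1 [Hl1 Hx]] [l2 [Hl2 Hy]].
    assert (Hl : subset (list_set (l1 ++ l2)) A).
    { intros z Hz. apply list_set_app in Hz as [Hz|Hz]; auto. }
    destruct (sup_in_closure_exists (A := list_set (l1 ++ l2))) as [d Hd].
    { intros z Hz. apply HA, Hl, Hz. }
    exists d. split; [exists (l1 ++ l2); auto | split].
    + apply (sup_least Hx). split; [exact (sup_in_carrier Hd)|].
      intros z Hz. apply (sup_upper Hd), list_set_app; auto.
    + apply (sup_least Hy). split; [exact (sup_in_carrier Hd)|].
      intros z Hz. apply (sup_upper Hd), list_set_app; auto.
Qed.

Lemma finite_sups_finite_bound A l : subset (list_set l) (finite_sups A) ->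
  exists l', subset (list_set l') A /\
    forall d y, In d l -> upper_in L' le (list_set l') y -> le d y.
Proof.
  induction l as [|d l IH]; intros Hsub.
  - exists nil. split; [intros x [] | intros d y []].
  - destruct IH as [l' [Hl' Hbound]]; [intros x Hx; apply Hsub; right; auto|].
    destruct (Hsub d (or_introl eq_refl)) as [ld [Hld Hd]].
    exists (ld ++ l'). split.
    + intros x Hx. apply list_set_app in Hx as [Hx|Hx]; auto.
    + intros d' y Hd' [Hy Hyub]. assert (Hy' : forall l0, subset (list_set l0)
          (list_set (ld ++ l')) -> upper_in L' le (list_set l0) y).
      { intros l0 H0. split; [exact Hy | intros z Hz; apply Hyub, H0, Hz]. }
      destruct Hd' as [<-|Hd'].
      * apply (sup_least Hd), Hy'. intros z Hz. apply list_set_app; auto.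
      * apply Hbound, Hy'; auto. intros z Hz. apply list_set_app; auto.
Qed.

Lemma compact_in_pi c : compact_in U le c -> compact_in L' le (pi c).
Proof.
  intros [_ Kc]. split; [apply pi_in|]. intros A s HA Hs Hcs.
  destruct (sup_exists (finite_sups A)) as [v Hv].
  assert (HvL : L' v).
  { apply (directed_sup_closed (A := finite_sups A)); auto using finite_sups_directed.
    intros d [l [_ Hd]]. exact (sup_in_carrier Hd). }
  assert (Hsv : le s v).
  { apply (sup_least Hs). split; [exact HvL|]. intros y Hy.
    apply (sup_upper Hv). exists (y :: nil). split; [intros z [<-|[]]; exact Hy|].
    apply is_sup_singleton, HA, Hy. }
  destruct (Kc (finite_sups A) v (fun x _ => I) Hv) as [l [s' [Hl [Hs' Hcs']]]].
  { apply le_trans with (pi c); [apply le_pi|]. apply le_trans with s; auto. }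
  destruct (finite_sups_finite_bound Hl) as [l' [Hl' Hbound]].
  destruct (sup_in_closure_exists (A := list_set l')) as [s'' Hs''].
  { intros x Hx. apply HA, Hl', Hx. }
  exists l', s''. split; [exact Hl'|]. split; [exact Hs''|].
  apply pi_least; [exact (sup_in_carrier Hs'')|].
  apply le_trans with s'; [exact Hcs'|]. apply (sup_least Hs').
  split; [exact I|]. intros d Hd. apply Hbound; [exact Hd | exact (proj1 Hs'')].
Qed.

Lemma compact_join_below_image A a l : subset A (compact_in U le) ->
  (forall x, A x -> le x a) -> subset (list_set l) (image pi A) ->
  exists c, compact_in U le c /\ le c a /\ forall y, In y l -> le y (pi c).
Proof.
  intros HAc HAa. induction l as [|y l IH]; intros Hsub.
  - destruct (sup_exists (fun _ => False)) as [b Hb].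
    assert (Hbot : forall x, le b x).
    { intros x. apply (sup_least Hb). split; [exact I | intros y []]. }
    exists b. split; [apply compact_in_least, Hbot|]. split; [apply Hbot | intros y []].
  - destruct IH as [c [Hc [Hca Hcl]]]; [intros x Hx; apply Hsub; right; auto|].
    destruct (Hsub y (or_introl eq_refl)) as [x [Hx ->]].
    destruct (sup_exists (pair_set c x)) as [u Hu].
    exists u. split; [apply (compact_in_join Hc (HAc x Hx) Hu)|]. split.
    + apply (sup_least Hu). split; [exact I|]. intros z [->| ->]; auto.
    + intros z [<-|Hz].
      * apply pi_mono, (sup_upper Hu). right; reflexivity.
      * apply le_trans with (pi c); [apply Hcl, Hz|].
        apply pi_mono, (sup_upper Hu). left; reflexivity.
Qed.

Hypothesis algebraic :
  forall a, exists A, subset A (compact_in U le) /\ is_sup_in U le A a.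

Lemma compact_in_closure_pi a : compact_in L' le a ->
  exists c, compact_in U le c /\ a = pi c.
Proof.
  intros [Ha Ka]. destruct (algebraic a) as [A [HAc HAa]].
  assert (HAa' : is_sup_in L' le (image pi A) a).
  { rewrite <- (pi_id Ha). apply is_sup_pi_image, HAa. }
  destruct (Ka (image pi A) a) as [l [s' [Hl [Hs' Has']]]];
    [intros y [x [_ ->]]; apply pi_in | exact HAa' | apply le_refl |].
  destruct (compact_join_below_image HAc (fun x Hx => sup_upper HAa Hx) Hl)
    as [c [Hc [Hca Hcl]]].
  exists c. split; [exact Hc|]. apply le_antisym.
  - apply le_trans with s'; [exact Has'|]. apply (sup_least Hs').
    split; [apply pi_in | exact Hcl].
  - apply pi_least; auto.
Qed.

Lemma closure_algebraic a : L' a ->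
  exists A, subset A (compact_in L' le) /\ is_sup_in L' le A a.
Proof.
  intros Ha. destruct (algebraic a) as [A [HAc HAa]]. exists (image pi A). split.
  - intros y [x [Hx ->]]. apply compact_in_pi, HAc, Hx.
  - rewrite <- (pi_id Ha). apply is_sup_pi_image, HAa.
Qed.

Variable mul : T -> T -> T.
Hypothesis pi_mul_r : forall a b, pi (mul a (pi b)) = pi (mul a b).
Hypothesis pi_mul_l : forall a b, pi (mul (pi a) b) = pi (mul a b).
Hypothesis mul_assoc : forall a b c, mul (mul a b) c = mul a (mul b c).
Hypothesis mul_distr : forall a b c s, is_sup_in U le (pair_set b c) s ->
  is_sup_in U le (pair_set (mul a b) (mul a c)) (mul a s) /\
  is_sup_in U le (pair_set (mul b a) (mul c a)) (mul s a).
Hypothesis mul_top : forall t, is_sup_in U le U t ->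
  compact_in U le t /\ forall a, mul t a = a /\ mul a t = a.
Hypothesis mul_compact : forall a b,
  compact_in U le a -> compact_in U le b -> compact_in U le (mul a b).

Lemma closure_mul_assoc a b c :
  pi (mul (pi (mul a b)) c) = pi (mul a (pi (mul b c))).
Proof. rewrite pi_mul_l, pi_mul_r, mul_assoc. reflexivity. Qed.

Lemma closure_distributive a b c s : L' b -> L' c -> is_sup_in L' le (pair_set b c) s ->
  is_sup_in L' le (pair_set (pi (mul a b)) (pi (mul a c))) (pi (mul a s)) /\
  is_sup_in L' le (pair_set (pi (mul b a)) (pi (mul c a))) (pi (mul s a)).
Proof.
  intros Hb Hc Hs. destruct (sup_exists (pair_set b c)) as [u Hu].
  assert (Hsu : s = pi u).
  { apply (is_sup_unique Hs), is_sup_pi_sub; [intros x [->| ->]; auto | exact Hu]. }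
  subst s. rewrite pi_mul_r, pi_mul_l.
  destruct (mul_distr a Hu) as [Hl Hr]. split; apply is_sup_pi_pair; assumption.
Qed.

Lemma closure_top t : is_sup_in L' le L' t ->
  compact_in L' le t /\ forall a, L' a -> pi (mul t a) = a /\ pi (mul a t) = a.
Proof.
  intros Ht. destruct (sup_exists U) as [one Hone].
  assert (Htone : t = pi one) by apply (is_sup_unique Ht), is_sup_pi_top, Hone.
  destruct (mul_top Hone) as [Hcone Hid].
  rewrite Htone. split; [apply compact_in_pi, Hcone|].
  intros a Ha. rewrite pi_mul_r, pi_mul_l.
  destruct (Hid a) as [-> ->]. rewrite (pi_id Ha). split; reflexivity.
Qed.

Lemma closure_compact_mul a b :
  compact_in L' le a -> compact_in L' le b -> compact_in L' le (pi (mul a b)).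
Proof.
  intros Ha Hb.
  destruct (compact_in_closure_pi Ha) as [c [Hc ->]].
  destruct (compact_in_closure_pi Hb) as [d [Hd ->]].
  rewrite pi_mul_r, pi_mul_l. apply compact_in_pi, mul_compact; assumption.
Qed.

Theorem closure_ideal_lattice : ideal_lattice_on L' le (fun a b => pi (mul a b)).
Proof.
  refine (conj _ (conj _ (conj _ (conj _ (conj _ (conj _ _)))))).
  - intros; apply pi_in.
  - intros a b c _ _ _. apply closure_mul_assoc.
  - split; [split; [|split] |].
    + intros; apply le_refl.
    + intros; apply le_antisym; assumption.
    + intros x y z _ _ _; apply le_trans.
    + apply sup_in_closure_exists.
  - apply closure_algebraic.
  - intros a b c s _. apply closure_distributive.
  - apply closure_top.
  - apply closure_compact_mul.
Qed.

End Closure.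
End CompleteLattice.

Theorem mainTheorem12 (T : Type) (le : T -> T -> Prop) (mul : T -> T -> T)
  (L' : T -> Prop) (pi : T -> T) :
  ideal_lattice_on (everything T) le mul ->
  (forall A x, subset A L' -> is_inf_in (everything T) le A x -> L' x) ->
  (forall A x, subset A L' -> directed le A ->
     is_sup_in (everything T) le A x -> L' x) ->
  (forall a, is_inf_in (everything T) le (fun a' => L' a' /\ le a a') (pi a)) ->
  (forall a b, pi (mul a (pi b)) = pi (mul a b) /\ pi (mul a b) = pi (mul (pi a) b)) ->
  ideal_lattice_on L' le (fun a b => pi (mul a b)).
Proof.
  intros [_ [Hassoc [[[Hrefl [Hanti Htrans]] Hsup] [HL2 [HL3 [HL4 HL5]]]]]] Hi Hii Hpi Hiii.
  apply closure_ideal_lattice; auto.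
  - exact (fun x => Hrefl x I).
  - exact (fun x y => Hanti x y I I).
  - exact (fun x y z => Htrans x y z I I I).
  - exact (fun A => Hsup A (fun _ _ => I)).
  - exact (fun a => HL2 a I).
  - apply Hiii.
  - symmetry; apply Hiii.
  - exact (fun a b c => Hassoc a b c I I I).
  - exact (fun a b c s => HL3 a b c s I I I).
  - intros t Ht. destruct (HL4 t Ht) as [Hc Hid].
    split; [exact Hc | intros a; exact (Hid a I)].
Qed.
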